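(* Let $P\subset\mathbb{H}^4$ be the regular right-angled compact hyperbolic $120$-cell. A maximum set of pairwise disjoint walls of $P$ has $24$ elements.
   Context: Use the hyperboloid model $\mathbb{H}^4=\{x\in\mathbb{R}^5:(x,x)=-1,x_0>0\}$ with Minkowski form $(x,y)=-x_0y_0+\sum_{i=1}^4x_iy_i$. The hyperbolic $120$-cell $P$ is the compact regular convex polytope in $\mathbb{H}^4$ with $120$ dodecahedral walls ($3$-dimensional faces), any two intersecting walls meeting at right angles; it is bounded by the $120$ hyperplanes $\vec n^\perp\cap\mathbb{H}^4$ where, with $\tau=(1+\sqrt5)/2$, $\vec n$ ranges over: the $8$ vectors obtained by permuting the last four coordinates of $(\sqrt{2\tau},\pm2,0,0,0)$; the $16$ vectors $(\sqrt{2\tau},\pm1,\pm1,\pm1,\pm1)$; and the $96$ vectors obtained by even permutations of the last four coordinates of $(\sqrt{2\tau},\pm\tau,\pm1,\pm\tau^{-1},0)$. Two walls are disjoint if they do not intersect in $\mathbb{H}^4$. Each wall meets exactly $12$ other walls. *)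

From HB Require Import structures.
From mathcomp Require Import all_boot all_order all_algebra.
From mathcomp Require Import reals.
Set Implicit Arguments. Unset Strict Implicit. Unset Printing Implicit Defensive.
Import Order.TTheory GRing.Theory Num.Theory.
Local Open Scope ring_scope.

Section C120.
Variable R : realType.

Definition tau : R := (1 + Num.sqrt 5) / 2.

Definition mink (x y : 'I_5 -> R) : R :=
  - x ord0 * y ord0 + \sum_(i < 4) x (lift ord0 i) * y (lift ord0 i).

Definition inH4 (x : 'I_5 -> R) : Prop := mink x x = -1 /\ 0 < x ord0.

Definition signs : seq R := [:: 1; -1].

(* the 12 even permutations of {0,1,2,3} *)
Definition evenperms : seq (seq nat) :=
  [:: [:: 0; 1; 2; 3]%N; [:: 0; 2; 3; 1]%N; [:: 0; 3; 1; 2]%N; [:: 1; 0; 3; 2]%N;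
      [:: 1; 2; 0; 3]%N; [:: 1; 3; 2; 0]%N; [:: 2; 0; 1; 3]%N; [:: 2; 1; 3; 0]%N;
      [:: 2; 3; 0; 1]%N; [:: 3; 0; 2; 1]%N; [:: 3; 1; 0; 2]%N; [:: 3; 2; 1; 0]%N].

(* last four coordinates of the 120 normal vectors *)
Definition spatial1 : seq (seq R) :=
  flatten [seq [seq [seq (if k == p then e * 2 else 0) | k <- iota 0 4] | e <- signs]
          | p <- iota 0 4].
Definition spatial2 : seq (seq R) :=
  flatten (flatten (flatten
    [seq [seq [seq [seq [:: a; b; c; d] | d <- signs] | c <- signs] | b <- signs]
    | a <- signs])).
Definition spatial3 : seq (seq R) :=
  flatten (flatten (flatten
    [seq [seq [seq [seq [seq nth 0 [:: a * tau; b; c * tau^-1; 0] j | j <- pi]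
                   | c <- signs] | b <- signs] | a <- signs] | pi <- evenperms])).
Definition spatials : seq (seq R) := spatial1 ++ spatial2 ++ spatial3.

Definition normal (i : 'I_120) : 'I_5 -> R :=
  fun k => if k == ord0 then Num.sqrt (2 * tau)
           else nth 0 (nth [::] spatials i) k.-1.

(* the 120-cell P: the side of every hyperplane containing (1,0,0,0,0) *)
Definition inP (x : 'I_5 -> R) : Prop :=
  inH4 x /\ forall i : 'I_120, mink x (normal i) <= 0.

Definition in_wall (i : 'I_120) (x : 'I_5 -> R) : Prop :=
  inP x /\ mink x (normal i) = 0.

Definition disjoint_walls (i j : 'I_120) : Prop :=
  ~ exists x, in_wall i x /\ in_wall j x.

Definition pairwise_disjoint_walls (S : {set 'I_120}) : Prop :=
  forall i j, i \in S -> j \in S -> i != j -> disjoint_walls i j.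

End C120.

From Pilot Require Import Defs.
From HB Require Import structures.
From mathcomp Require Import all_boot all_order all_algebra.
From mathcomp Require Import reals.
From mathcomp Require Import ring lra zify.
Set Implicit Arguments. Unset Strict Implicit. Unset Printing Implicit Defensive.
Import Order.TTheory GRing.Theory Num.Theory.
Local Open Scope ring_scope.

(** Two walls of P meet iff their normals are Minkowski-orthogonal, which for the
    given normals means that their spatial parts have dot product 2τ; for every other
    pair of distinct walls the normals sum to a timelike vector, so the walls are
    disjoint.  The intersection graph of the walls is therefore computable over
    Z[τ]: it is 12-regular and no 4 neighbours of a wall are pairwise disjoint.
    Counting the edges between a family S of pairwise disjoint walls and its
    complement gives 12 |S| <= 3 (120 - |S|), i.e. |S| <= 24, and the first 24
    normals of the list give such a family. *)

Definition stable (T : Type) (pT : predType T) (e : rel T) (A : pT) : Prop :=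
  {in A &, forall x y, ~~ e x y}.

Lemma stable_sub (T : Type) (pT pT' : predType T) (e : rel T) (A : pT) (B : pT') :
  {subset A <= B} -> stable e B -> stable e A.
Proof. by move=> AB stB x y /AB xB /AB yB; apply: stB. Qed.

Fixpoint has_stable (T : eqType) (e : rel T) (n : nat) (s : seq T) : bool :=
  if n is n'.+1 then
    (fix with_tail s := if s is x :: s' then
                          has_stable e n' [seq y <- s' | ~~ e x y] || with_tail s'
                        else false) s
  else true.

Lemma has_stable_cons (T : eqType) (e : rel T) n x s :
  has_stable e n.+1 (x :: s) =
  has_stable e n [seq y <- s | ~~ e x y] || has_stable e n.+1 s.
Proof. by []. Qed.

Lemma has_stable_sub (T : eqType) (e : rel T) n s (t : seq T) :
  uniq t -> {subset t <= s} -> stable e t -> (n <= size t)%N -> has_stable e n s.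
Proof.
elim: n s t => [//|n IHn] s; elim: s => [|x s IHs] t ut ts st nt.
  by case: t ut ts st nt => // y t _ /(_ y); rewrite mem_head => /(_ isT).
rewrite has_stable_cons; case tx: (x \in t).
  apply/orP; left; apply: (IHn _ (rem x t) (rem_uniq x ut)).
  - move=> y; rewrite (mem_rem_uniq x ut) inE => /andP[y_neq_x y_t].
    rewrite mem_filter (st x y) //=.
    by move: (ts y y_t); rewrite inE (negbTE y_neq_x).
  - exact: stable_sub (mem_rem (s := t)) st.
  - by rewrite size_rem // -ltnS (ltn_predK nt).
apply/orP; right; apply: (IHs t) => // y yt.
by move: (ts y yt); rewrite inE; case: eqP => [yx|//]; rewrite -yx yt in tx.
Qed.

Section RegularGraph.
Variables (T : finType) (e : rel T) (k m : nat).
Hypotheses (e_sym : symmetric e) (e_regular : forall x, #|[set y | e x y]| = k)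
  (nbhd_stable_card : forall x (A : {set T}),
     A \subset [set y | e x y] -> stable e A -> (#|A| <= m)%N).

(* Double counting of the edges between S and its complement. *)
Lemma stable_card_le (S : {set T}) : stable e S -> (k * #|S| <= m * #|~: S|)%N.
Proof.
move=> stS.
have nbhd_in_S x : #|[set y in S | e x y]| = (\sum_(y in S) e x y)%N.
  by rewrite -sum1dep_card big_mkcondr.
have -> : (k * #|S| = \sum_x #|[set y in S | e x y]|)%N.
  rewrite (eq_bigr _ (fun x _ => nbhd_in_S x)) exchange_big /= -sum1_card big_distrr /=.
  apply: eq_bigr => y _; rewrite muln1 -(e_regular y) -sum1dep_card big_mkcond /=.
  by apply: eq_bigr => x _; rewrite e_sym.
rewrite (bigID (mem S)) /= big1 => [|x xS]; last first.
  apply/eqP; rewrite cards_eq0 -subset0; apply/subsetP => y; rewrite inE => /andP[yS exy].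
  by move: (stS x y xS yS); rewrite exy.
rewrite add0n mulnC -sum_nat_const (eq_bigl _ _ (fun x => in_setC x S)).
apply: leq_sum => x _; apply: (nbhd_stable_card (x := x)).
  by apply/subsetP => y; rewrite !inE => /andP[_ ->].
by apply: stable_sub stS => y; rewrite inE => /andP[].
Qed.
End RegularGraph.

(* [(a, b)] stands for [a + b τ]; the product uses [τ^2 = τ + 1]. *)
Definition ztau := (int * int)%type.
Definition ztau_add (x y : ztau) : ztau := (x.1 + y.1, x.2 + y.2).
Definition ztau_mul (x y : ztau) : ztau :=
  (x.1 * y.1 + x.2 * y.2, x.1 * y.2 + x.2 * y.1 + x.2 * y.2).

Lemma ztau_mulC : commutative ztau_mul.
Proof. by move=> [a b] [c d]; rewrite /ztau_mul /=; congr pair; ring. Qed.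

Definition signsZ : seq ztau := [:: (1, 0); (-1, 0)].
Definition spatial1Z : seq (seq ztau) :=
  flatten [seq [seq [seq (if k == p then ztau_mul e (2, 0) else (0, 0)) | k <- iota 0 4]
               | e <- signsZ] | p <- iota 0 4].
Definition spatial2Z : seq (seq ztau) :=
  flatten (flatten (flatten
    [seq [seq [seq [seq [:: a; b; c; d] | d <- signsZ] | c <- signsZ] | b <- signsZ]
    | a <- signsZ])).
Definition spatial3Z : seq (seq ztau) :=
  flatten (flatten (flatten
    [seq [seq [seq [seq [seq nth (0, 0) [:: ztau_mul a (0, 1); b; ztau_mul c (-1, 1); (0, 0)] j
                        | j <- pi]
                   | c <- signsZ] | b <- signsZ] | a <- signsZ] | pi <- evenperms])).
Definition spatialsZ : seq (seq ztau) := spatial1Z ++ spatial2Z ++ spatial3Z.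

(* Dot product of the spatial parts of the normals: [(n_i, n_j) = gramZ i j - 2 τ]. *)
Definition gramZ (i j : nat) : ztau :=
  let u := nth [::] spatialsZ i in let v := nth [::] spatialsZ j in
  foldr ztau_add (0, 0) [seq ztau_mul (nth (0, 0) u k) (nth (0, 0) v k) | k <- iota 0 4].
Arguments gramZ : simpl never.

Definition meetsZ : rel nat := fun i j => gramZ i j == (0, 2).
Definition adjacent : rel 'I_120 := fun i j => meetsZ i j.

Definition disjoint_gram_values : seq ztau :=
  [:: (2, 0); (-2, 2); (0, 0); (2, -2); (-2, 0); (0, -2); (-4, 0)].

Lemma all_iota_ord n (P : pred nat) : all P (iota 0 n) -> forall i : 'I_n, P i.
Proof. by move=> /allP allP i; apply: allP; rewrite mem_iota /=. Qed.

Lemma card_ord_count n (P : pred nat) : #|[set i : 'I_n | P i]| = count P (iota 0 n).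
Proof. by rewrite -sum1dep_card -(big_mkord P (fun=> 1%N)) sum1_count /index_iota subn0. Qed.

Lemma gramZC i j : gramZ i j = gramZ j i.
Proof. by rewrite /gramZ; congr foldr; apply: eq_map => k; rewrite ztau_mulC. Qed.

Lemma gramZ_diag (i : 'I_120) : gramZ i i = (4, 0).
Proof.
have check : all (fun i => gramZ i i == (4, 0)) (iota 0 120) by vm_compute.
by apply/eqP; apply: all_iota_ord check i.
Qed.

Lemma gramZ_offdiag (i j : 'I_120) :
  i != j -> meetsZ i j || (gramZ i j \in disjoint_gram_values).
Proof.
have check : all (fun i => all (fun j => [|| i == j, meetsZ i j | gramZ i j \in disjoint_gram_values])
                             (iota 0 120)) (iota 0 120) by vm_compute.
move=> ij; have /all_iota_ord/(_ j) := all_iota_ord check i.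
by rewrite val_eqE (negbTE ij).
Qed.

Lemma adjacent_sym : symmetric adjacent.
Proof. by move=> i j; rewrite /adjacent /meetsZ gramZC. Qed.

Lemma adjacent_irr (i : 'I_120) : ~~ adjacent i i.
Proof. by rewrite /adjacent /meetsZ gramZ_diag. Qed.

Lemma card_adjacent (i : 'I_120) : #|[set j | adjacent i j]| = 12%N.
Proof.
have check : all (fun i => count (meetsZ i) (iota 0 120) == 12%N) (iota 0 120)
  by vm_compute.
by rewrite (card_ord_count _ (meetsZ i)); apply/eqP; apply: all_iota_ord check i.
Qed.

Lemma adjacent_nbhd_stable (v : 'I_120) (A : {set 'I_120}) :
  A \subset [set j | adjacent v j] -> stable adjacent A -> (#|A| <= 3)%N.
Proof.
have check : all (fun v => ~~ has_stable meetsZ 4 [seq j <- iota 0 120 | meetsZ v j])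
                 (iota 0 120) by vm_compute.
move=> Av stA; rewrite leqNgt; apply/negP => A4.
move/negP: (all_iota_ord check v); apply.
apply: (has_stable_sub (t := map val (enum A))).
- rewrite (map_inj_uniq val_inj); exact: enum_uniq.
- move=> _ /mapP[j jA ->]; rewrite mem_filter mem_iota /= ltn_ord andbT.
  by move: jA; rewrite mem_enum => /(subsetP Av); rewrite inE.
- by move=> _ _ /mapP[i iA ->] /mapP[j jA ->]; apply: stA; rewrite -mem_enum.
- by rewrite size_map -cardE.
Qed.

Lemma stable_first24 : stable adjacent [set i : 'I_120 | (i < 24)%N].
Proof.
have check : all (fun i => all (fun j => ~~ meetsZ i j) (iota 0 24)) (iota 0 24)
  by vm_compute.
move=> i j; rewrite !inE => i24 j24.
by move/allP: check => /(_ i); rewrite mem_iota => /(_ i24)/allP/(_ j); rewrite mem_iota; apply.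
Qed.

Lemma card_first24 : #|[set i : 'I_120 | (i < 24)%N]| = 24%N.
Proof. by rewrite (card_ord_count _ (fun i => i < 24)%N). Qed.

Lemma nth_map_dflt (T U : Type) (x0 : T) (y0 : U) (f : T -> U) s n :
  f x0 = y0 -> nth y0 (map f s) n = f (nth x0 s n).
Proof. by move=> fx0; elim: s n => [|x s IHs] [|n] //=. Qed.

Section Geometry.
Variable R : realType.
Local Notation tau := (tau R).
Local Notation normal := (normal R).
Local Notation r := (Num.sqrt (2 * tau)).
Implicit Types x y z v : 'I_5 -> R.

Lemma sqrt5_sqr : Num.sqrt (5 : R) ^+ 2 = 5.
Proof. by rewrite sqr_sqrtr // ler0n. Qed.

Lemma tau_bounds : 3 / 2 < tau < 2.
Proof.
have := sqrtr_ge0 (5 : R); have := sqrt5_sqr; rewrite /Defs.tau => *.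
by apply/andP; split; nra.
Qed.

Lemma tau_sqr : tau ^+ 2 = tau + 1.
Proof.
apply/eqP; rewrite -subr_eq0; apply/eqP.
transitivity ((Num.sqrt (5 : R) ^+ 2 - 5) / 4); first by rewrite /Defs.tau; field.
by rewrite sqrt5_sqr subrr mul0r.
Qed.

Lemma tauV : tau^-1 = tau - 1.
Proof.
have /andP[tau_gt _] := tau_bounds.
have tau_neq0 : tau != 0 by rewrite gt_eqF //; lra.
by apply: (mulfI tau_neq0); rewrite mulfV // mulrBr mulr1 -expr2 tau_sqr; ring.
Qed.

Definition ztauR (x : ztau) : R := x.1%:~R + x.2%:~R * tau.

Lemma ztauR_add (x y : ztau) : ztauR (ztau_add x y) = ztauR x + ztauR y.
Proof. by rewrite /ztauR /= !intrD; ring. Qed.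

Lemma ztauR_mul (x y : ztau) : ztauR (ztau_mul x y) = ztauR x * ztauR y.
Proof.
case: x y => [a b] [c d]; rewrite /ztauR /ztau_mul /= !intrD !intrM.
apply/eqP; rewrite -subr_eq0; apply/eqP.
transitivity (- b%:~R * d%:~R * (tau ^+ 2 - (tau + 1))); first ring.
by rewrite tau_sqr subrr mulr0.
Qed.

Lemma ztauR0 : ztauR (0, 0) = 0.
Proof. by rewrite /ztauR mul0r addr0. Qed.

Lemma spatialsE : spatials R = map (map ztauR) spatialsZ.
Proof.
rewrite /spatials /spatialsZ /spatial1 /spatial2 /spatial3 /spatial1Z /spatial2Z /spatial3Z.
by rewrite /signs /signsZ /= tauV; do !congr (_ :: _); rewrite /ztauR /=; ring.
Qed.

Lemma sqrt_2tau_sqr : r ^+ 2 = 2 * tau.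
Proof. by rewrite sqr_sqrtr //; have /andP[] := tau_bounds; lra. Qed.

Lemma mink_normal (i j : 'I_120) :
  mink (normal i) (normal j) = - (2 * tau) + ztauR (gramZ i j).
Proof.
rewrite /mink !big_ord_recl big_ord0 /normal /gramZ /= spatialsE.
rewrite !(nth_map_dflt _ _ (erefl (map ztauR [::]))) !(nth_map_dflt _ _ ztauR0).
by rewrite !ztauR_add !ztauR_mul ztauR0 mulNr -expr2 sqrt_2tau_sqr /bump /=; ring.
Qed.

Lemma minkC x y : mink x y = mink y x.
Proof. by rewrite /mink !big_ord_recl !big_ord0; ring. Qed.

Lemma minkDl x y z : mink (fun k => x k + y k) z = mink x z + mink y z.
Proof. by rewrite /mink !big_ord_recl !big_ord0; ring. Qed.

Lemma minkZl (a : R) x z : mink (fun k => a * x k) z = a * mink x z.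
Proof. by rewrite /mink !big_ord_recl !big_ord0; ring. Qed.

Lemma reverse_cauchy_schwarz (x0 x1 x2 x3 x4 v0 v1 v2 v3 v4 : R) :
  0 < x0 -> - x0 * x0 + (x1 * x1 + (x2 * x2 + (x3 * x3 + (x4 * x4 + 0)))) = -1 ->
  - x0 * v0 + (x1 * v1 + (x2 * v2 + (x3 * v3 + (x4 * v4 + 0)))) = 0 ->
  0 <= - v0 * v0 + (v1 * v1 + (v2 * v2 + (v3 * v3 + (v4 * v4 + 0)))).
Proof.
set X := x1 * x1 + _; set P := x1 * v1 + _; set V := v1 * v1 + _ => x0_gt0 xx xv.
have cauchy_schwarz : P ^+ 2 <= X * V.
  have -> : X * V = P ^+ 2 + ((x1 * v2 - x2 * v1) ^+ 2 + (x1 * v3 - x3 * v1) ^+ 2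
      + (x1 * v4 - x4 * v1) ^+ 2 + (x2 * v3 - x3 * v2) ^+ 2 + (x2 * v4 - x4 * v2) ^+ 2
      + (x3 * v4 - x4 * v3) ^+ 2) by rewrite /X /V /P; ring.
  by rewrite lerDl !addr_ge0 ?sqr_ge0.
have V_ge0 : 0 <= V by rewrite /V; nra.
have P_eq : P = x0 * v0 by lra.
have X_eq : X = x0 ^+ 2 - 1 by rewrite expr2; lra.
rewrite P_eq X_eq exprMn in cauchy_schwarz.
have x0_sqr_gt0 : 0 < x0 ^+ 2 by rewrite exprn_gt0.
rewrite mulNr -expr2.
move: cauchy_schwarz x0_sqr_gt0 V_ge0; move: (x0 ^+ 2) (v0 ^+ 2) => a b.
nra.
Qed.

Lemma mink_self_ge0_of_orthogonal x v : inH4 x -> mink x v = 0 -> 0 <= mink v v.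
Proof.
case=> xx x0_gt0; move: x0_gt0 xx; rewrite /mink !big_ord_recl !big_ord0 /=.
exact: reverse_cauchy_schwarz.
Qed.

Local Notation gram i j := (ztauR (gramZ i j)).

Lemma ztauR_disjoint_le2 (z : ztau) : z \in disjoint_gram_values -> ztauR z <= 2.
Proof.
have /andP[tau_gt tau_lt] := tau_bounds.
rewrite !inE => zv; repeat case/orP: zv => [/eqP-> | zv]; try move/eqP: zv => ->.
all: by rewrite /ztauR /=; lra.
Qed.

Lemma gram_diag (i : 'I_120) : gram i i = 4.
Proof. by rewrite gramZ_diag /ztauR /= mul0r addr0. Qed.

Lemma gram_le2 (i j : 'I_120) : i != j -> ~~ adjacent i j -> gram i j <= 2.
Proof. by move=> /gramZ_offdiag/orP[adj_ij /negP[] | /ztauR_disjoint_le2]. Qed.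

Lemma gram_offdiag_le (i j : 'I_120) : i != j -> gram i j <= 2 * tau.
Proof.
have /andP[tau_gt _] := tau_bounds.
move=> ij; case: (boolP (adjacent i j)) => [/eqP-> | /(gram_le2 ij)]; last lra.
by rewrite /ztauR /= add0r.
Qed.

Lemma gram_add_le (i j k : 'I_120) : i != j -> gram i k + gram j k <= 4 + 2 * tau.
Proof.
have /andP[_ tau_lt] := tau_bounds.
have gram_le4 (l : 'I_120) : gram l k <= 4.
  case: (eqVneq l k) => [->|lk]; first by rewrite gram_diag.
  by have := gram_offdiag_le lk; lra.
move=> ij; case: (eqVneq i k) => [ik|ik].
  have jk : j != k by rewrite -ik eq_sym.
  by have := gram_offdiag_le jk; have := gram_le4 i; lra.
by have := gram_offdiag_le ik; have := gram_le4 j; lra.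
Qed.

Lemma mink_normal_self (i : 'I_120) : mink (normal i) (normal i) = 4 - 2 * tau.
Proof. by rewrite mink_normal gram_diag addrC. Qed.

Lemma disjoint_walls_of_gram_le2 (i j : 'I_120) : gram i j <= 2 -> disjoint_walls R i j.
Proof.
move=> gij [x [[[xH4 _] xi] [_ xj]]].
pose v k := normal i k + normal j k.
have xv : mink x v = 0 by rewrite minkC minkDl !(minkC _ x) xi xj addr0.
have := mink_self_ge0_of_orthogonal xH4 xv.
rewrite minkDl !(minkC (normal _)) !minkDl !mink_normal_self !mink_normal gramZC.
by have /andP[tau_gt _] := tau_bounds; lra.
Qed.

Lemma normal_ord0 (k : 'I_120) : normal k ord0 = r.
Proof. by []. Qed.

Definition e0 : 'I_5 -> R := fun k => (k == ord0)%:R.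

Lemma mink_e0l z : mink e0 z = - z ord0.
Proof. by rewrite /mink !big_ord_recl big_ord0 /e0 /=; ring. Qed.

Definition normalize y : 'I_5 -> R := fun k => (Num.sqrt (- mink y y))^-1 * y k.

Lemma mink_normalizel y z : mink (normalize y) z = (Num.sqrt (- mink y y))^-1 * mink y z.
Proof. exact: minkZl. Qed.

Lemma inH4_normalize y : mink y y < 0 -> 0 < y ord0 -> inH4 (normalize y).
Proof.
move=> yy y0; have sqrt_gt0 : 0 < Num.sqrt (- mink y y) by rewrite sqrtr_gt0 oppr_gt0.
split; last by rewrite mulr_gt0 // invr_gt0.
rewrite mink_normalizel minkC mink_normalizel mulrA -invrM ?unitfE ?gt_eqF //.
by rewrite -expr2 sqr_sqrtr ?oppr_ge0 ?ltW // invrN mulNr mulVf ?lt_eqF.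
Qed.

Lemma in_wall_normalize (i : 'I_120) y :
  mink y y < 0 -> 0 < y ord0 -> (forall k, mink y (normal k) <= 0) ->
  mink y (normal i) = 0 -> in_wall i (normalize y).
Proof.
move=> yy y0 y_le0 yi; have sqrt_gt0 : 0 < Num.sqrt (- mink y y) by rewrite sqrtr_gt0 oppr_gt0.
split; last by rewrite mink_normalizel yi mulr0.
split=> [|k]; first exact: inH4_normalize.
by rewrite mink_normalizel pmulr_rle0 ?invr_gt0.
Qed.

Lemma walls_meet_of_adjacent (i j : 'I_120) :
  adjacent i j -> exists x, in_wall i x /\ in_wall j x.
Proof.
move=> adj_ij; have ij : i != j by apply: contraTneq adj_ij => ->; exact: adjacent_irr.
have gij : gram i j = 2 * tau by rewrite (eqP adj_ij) /ztauR /= add0r.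
have /andP[tau_gt tau_lt] := tau_bounds.
have r2 := sqrt_2tau_sqr; rewrite expr2 in r2.
(* [c = (n_i, n_i)] makes [y] orthogonal to [n_i] and [n_j]. *)
pose c := 4 - 2 * tau.
pose y k := c * e0 k + r * (normal i k + normal j k).
have y_normal k : mink y (normal k) = r * (gram i k + gram j k - (4 + 2 * tau)).
  by rewrite /y minkDl !minkZl minkDl mink_e0l normal_ord0 !mink_normal /c; ring.
have y_i : mink y (normal i) = 0 by rewrite y_normal gram_diag gramZC gij; ring.
have y_j : mink y (normal j) = 0 by rewrite y_normal gram_diag gij; ring.
have y0 : y ord0 = c + 4 * tau.
  by rewrite /y !normal_ord0 mulrDr r2 /e0 eqxx /=; lra.
have yy : mink y y = - c * (c + 4 * tau).
  by rewrite {1}/y minkDl !minkZl minkDl !(minkC (normal _)) y_i y_j mink_e0l y0; ring.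
have y_le0 k : mink y (normal k) <= 0.
  rewrite y_normal pmulr_rle0 ?sqrtr_gt0 ?subr_le0 ?gram_add_le //; lra.
exists (normalize y); split; apply: in_wall_normalize => //; rewrite ?yy ?y0 /c; nra.
Qed.

End Geometry.

Theorem proposition3p1 (R : realType) :
  (exists S : {set 'I_120}, pairwise_disjoint_walls R S /\ #|S| = 24%N) /\
  (forall S : {set 'I_120}, pairwise_disjoint_walls R S -> (#|S| <= 24)%N).
Proof.
split.
  exists [set i : 'I_120 | (i < 24)%N]; split; last exact: card_first24.
  move=> i j iS jS ij; apply: disjoint_walls_of_gram_le2.
  exact: gram_le2 ij (stable_first24 iS jS).
move=> S disjS.
have stS : stable adjacent S.
  move=> i j iS jS; apply/negP => adj_ij.
  have ij : i != j by apply: contraTneq adj_ij => ->; exact: adjacent_irr.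
  by apply: (disjS i j iS jS ij); exact: walls_meet_of_adjacent.
have := stable_card_le adjacent_sym card_adjacent adjacent_nbhd_stable stS.
have := cardsC S; rewrite card_ord; set a := #|S|; set b := #|~: S|; lia.
Qed.
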